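(* If $C$ and $D$ are finite connected racks such that $b(C)=b(D)$ in the Burnside ring $\mathrm{B}(\mathcal{R})$ of finite racks, then $C\cong D$ as racks.
   Context: A rack is a set $R$ with a binary operation $\rhd$ such that every left multiplication $\ell_a\colon b\mapsto a\rhd b$ is a bijection and $a\rhd(b\rhd c)=(a\rhd b)\rhd(a\rhd c)$ for all $a,b,c$. The inner automorphism group $\mathrm{Inn}(R)$ is the subgroup of the symmetric group on $R$ generated by all $\ell_a$. A rack is connected if it is non-empty and $\mathrm{Inn}(R)$ acts transitively on $R$. A subrack of $R$ is a subset $S$ with $\ell_s(S)=S$ for all $s\in S$. A decomposition of $R$ into $S$ and $T$ means that $S,T$ are disjoint subracks (possibly empty) with $S\cup T=R$. The Burnside ring of finite racks $\mathrm{B}(\mathcal{R})$ is the abelian group generated by symbols $b(R)$, one for each finite rack $R$, subject to the relations $b(R_1)=b(R_2)$ whenever $R_1\cong R_2$, and $b(R)=b(S)+b(T)$ whenever $R$ decomposes into subracks $S$ and $T$. *)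

From mathcomp Require Import all_boot all_fingroup all_algebra.
Set Implicit Arguments.
Unset Strict Implicit.
Unset Printing Implicit Defensive.

Definition rack_axioms (T : finType) (op : T -> T -> T) : Prop :=
  (forall a, bijective (op a)) /\
  (forall a b c, op a (op b c) = op (op a b) (op a c)).

Record frack := FRack {
  rcar :> finType;
  rop : rcar -> rcar -> rcar;
  rackP : rack_axioms rop }.

Definition lmul (R : frack) (a : rcar R) : {perm rcar R} :=
  perm (bij_inj (proj1 (rackP R) a)).

Definition Inn (R : frack) : {set {perm rcar R}} :=
  <<[set lmul a | a : rcar R]>>%g.

Definition connected_rack (R : frack) : bool :=
  (0 < #|rcar R|) && [transitive Inn R, on [set: rcar R] | 'P].

Definition rack_iso (C D : frack) : Prop :=
  exists f : rcar C -> rcar D,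
    bijective f /\ forall a b, f (rop a b) = rop (f a) (f b).

Definition is_subrack (R : frack) (S : {set rcar R}) : bool :=
  [forall s in S, [set rop s x | x in S] == S].

Section Subrack.
Variables (R : frack) (S : {set rcar R}) (HS : is_subrack S).

Lemma subrack_closed s x : s \in S -> x \in S -> rop s x \in S.
Proof.
move=> sS xS; have /forall_inP/(_ s sS)/eqP <- := HS.
by apply/imsetP; exists x.
Qed.

Definition sub_op (x y : {x : rcar R | x \in S}) : {x : rcar R | x \in S} :=
  exist _ (rop (sval x) (sval y)) (subrack_closed (svalP x) (svalP y)).

Lemma sub_rack_axioms : rack_axioms sub_op.
Proof.
split.
- move=> a; apply: injF_bij => x y /(congr1 sval) /=.
  by move/(bij_inj (proj1 (rackP R) (sval a)))/val_inj.
- move=> a b c; apply: val_inj => /=; exact: (proj2 (rackP R)).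
Qed.

Definition subrack : frack := FRack sub_rack_axioms.
End Subrack.

(* An additive invariant of finite racks with values in an abelian group A:
   a map respecting the defining relations of the Burnside ring B(R). *)
Definition burnside_additive (A : zmodType) (f : frack -> A) : Prop :=
  (forall R1 R2, rack_iso R1 R2 -> f R1 = f R2) /\
  (forall (R : frack) (S T : {set rcar R})
          (HS : is_subrack S) (HT : is_subrack T),
     [disjoint S & T] -> S :|: T = [set: rcar R] ->
     f R = (f (subrack HS) + f (subrack HT))%R).

(* b(C) = b(D) in B(R): since B(R) is the abelian group presented by the
   generators b(R) and the above relations, equality of two generators holds
   iff every relation-respecting map into an abelian group identifies them. *)
Definition burnside_eq (C D : frack) : Prop :=
  forall (A : zmodType) (f : frack -> A), burnside_additive f -> f C = f D.

(* Counting injective rack homomorphisms out of a fixed finite connected rack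
   [C] is additive on decompositions: a homomorphism image of [C] is contained
   in a single Inn-orbit, and in a decomposition [R = S ⊔ T] both parts are
   unions of orbits, so each embedding lands entirely in [S] or in [T]. Hence
   this count factors through the Burnside ring. If [b(C) = b(D)], the
   identity of [C] yields an embedding [C -> D], and symmetrically an
   embedding [D -> C]; an injection between finite sets of equal size is a
   bijection. *)
From mathcomp Require Import all_boot all_fingroup all_algebra.
Set Implicit Arguments.
Unset Strict Implicit.
Unset Printing Implicit Defensive.

Definition is_rack_emb (C R : frack) (h : {ffun C -> R}) : bool :=
  [forall a, forall b, h (rop a b) == rop (h a) (h b)] && injectiveb h.

Definition rack_embs (C R : frack) : {set {ffun C -> R}} :=
  [set h | is_rack_emb h].

Definition rack_embs_in (C R : frack) (S : {set R}) : {set {ffun C -> R}} :=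
  [set h in rack_embs C R | [forall x, h x \in S]].

Lemma is_rack_embP (C R : frack) (h : {ffun C -> R}) :
  reflect ((forall a b, h (rop a b) = rop (h a) (h b)) /\ injective h)
          (is_rack_emb h).
Proof.
apply: (iffP andP) => [[/forallP hom /injectiveP inj] | [hom /injectiveP inj]].
  by split=> // a b; apply/eqP; have /forallP := hom a.
by split=> //; apply/forallP => a; apply/forallP => b; rewrite hom.
Qed.

Lemma rack_emb_id (C : frack) : [ffun x => x] \in rack_embs C C.
Proof.
by rewrite inE; apply/is_rack_embP; split=> [a b | x y]; rewrite !ffunE.
Qed.

Lemma rack_iso_sym (R1 R2 : frack) : rack_iso R1 R2 -> rack_iso R2 R1.
Proof.
move=> [g [[g' gK g'K] hom]]; exists g'; split; first by exists g.
by move=> a b; apply: (can_inj gK); rewrite hom !g'K.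
Qed.

Section Embeddings.
Variable C : frack.

Lemma leq_card_rack_embs_iso (R1 R2 : frack) :
  rack_iso R1 R2 -> #|rack_embs C R1| <= #|rack_embs C R2|.
Proof.
move=> [g [/bij_inj g_inj hom_g]].
pose comp_g (h : {ffun C -> R1}) : {ffun C -> R2} := [ffun x => g (h x)].
have comp_g_inj : injective comp_g.
  by move=> h1 h2 /ffunP eq12; apply/ffunP => x; apply: g_inj;
     have := eq12 x; rewrite !ffunE.
rewrite -(card_imset _ comp_g_inj); apply/subset_leq_card/subsetP.
move=> h' /imsetP[h]; rewrite inE => /is_rack_embP[hom_h h_inj] ->.
rewrite inE; apply/is_rack_embP; split=> [a b | x y]; rewrite !ffunE.
  by rewrite hom_h hom_g.
by move/g_inj/h_inj.
Qed.

Lemma card_rack_embs_iso (R1 R2 : frack) :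
  rack_iso R1 R2 -> #|rack_embs C R1| = #|rack_embs C R2|.
Proof.
move=> iso12; apply/eqP; rewrite eqn_leq leq_card_rack_embs_iso //.
exact: leq_card_rack_embs_iso (rack_iso_sym iso12).
Qed.

Lemma card_rack_embs_subrack (R : frack) (S : {set R}) (HS : is_subrack S) :
  #|rack_embs C (subrack HS)| = #|rack_embs_in C S|.
Proof.
pose incl (h : {ffun C -> subrack HS}) : {ffun C -> R} :=
  [ffun x => sval (h x)].
have incl_inj : injective incl.
  by move=> h1 h2 /ffunP eq12; apply/ffunP => x; apply: val_inj;
     have := eq12 x; rewrite !ffunE.
rewrite -(card_imset _ incl_inj); apply: eq_card => h; apply/imsetP/idP.
  move=> [h']; rewrite inE => /is_rack_embP[hom h'_inj] ->.
  rewrite !inE; apply/andP; split; last first.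
    by apply/forallP => x; rewrite ffunE (svalP (h' x)).
  apply/is_rack_embP; split=> [a b | x y]; rewrite !ffunE; first by rewrite hom.
  by move/val_inj/h'_inj.
rewrite !inE => /andP[/is_rack_embP[hom h_inj] /forallP hS].
exists [ffun x => (exist _ (h x) (hS x) : subrack HS)].
  rewrite inE; apply/is_rack_embP; split=> [a b | x y]; rewrite !ffunE.
    by apply: val_inj; rewrite /= hom.
  by move/(congr1 sval)/h_inj.
by apply/ffunP => x; rewrite !ffunE.
Qed.

End Embeddings.

Lemma connected_rack_stable_setT (C : frack) (Y : {set C}) (y : C) :
  connected_rack C -> (forall a x, x \in Y -> rop a x \in Y) ->
  y \in Y -> Y = [set: C].
Proof.
move=> /andP[_ trans] stable yY; apply/setP => z; rewrite inE.
have Inn_norm : Inn C \subset 'N(Y | 'P)%g.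
  rewrite gen_subG; apply/subsetP => _ /imsetP[a _ ->].
  rewrite !inE; apply/subsetP => x xY.
  by rewrite inE /= apermE permE stable.
have [g gInn ->] := atransP2 trans (in_setT y) (in_setT z).
by rewrite (astabs_act _ (subsetP Inn_norm g gInn)).
Qed.

Section Decomposition.
Variables (R : frack) (S T : {set R}).
Hypotheses (HS : is_subrack S) (HT : is_subrack T).
Hypotheses (disST : [disjoint S & T]) (covST : S :|: T = [set: R]).

(* For [s] in [T], [l_s] permutes [T], so it cannot move a point of [S]
   into [T]. *)
Lemma decomposition_stable s y : y \in S -> rop s y \in S.
Proof.
move=> yS; have : s \in S :|: T by rewrite covST inE.
case/setUP => [sS | sT]; first exact: subrack_closed.
have : rop s y \in S :|: T by rewrite covST inE.
case/setUP => //.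
have /forall_inP/(_ s sT)/eqP <- := HT.
case/imsetP => z zT /(bij_inj (proj1 (rackP R) s)) eq_yz.
by rewrite -eq_yz (disjointFr disST yS) in zT.
Qed.

Lemma connected_hom_in_part (C : frack) (h : C -> R) (c : C) :
  connected_rack C -> (forall a b, h (rop a b) = rop (h a) (h b)) ->
  h c \in S -> forall x, h x \in S.
Proof.
move=> conC hom hcS x.
have preS : [set z | h z \in S] = [set: C].
  apply: (connected_rack_stable_setT (y := c) conC); last by rewrite inE.
  by move=> a y; rewrite !inE hom; apply: decomposition_stable.
by have := in_setT x; rewrite -preS inE.
Qed.

End Decomposition.

Lemma card_rack_embs_decomposition (C R : frack) (S T : {set R})
    (HS : is_subrack S) (HT : is_subrack T) :
  connected_rack C -> [disjoint S & T] -> S :|: T = [set: R] ->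
  #|rack_embs C R| = #|rack_embs_in C S| + #|rack_embs_in C T|.
Proof.
move=> conC disST covST.
have [c _] : exists c : C, c \in [set: C].
  by apply/card_gt0P; rewrite cardsT; case/andP: conC.
have in_S h : is_rack_emb h -> [forall x, h x \in S] = (h c \in S).
  move=> /is_rack_embP[hom _]; apply/forallP/idP => [/(_ c) // | ].
  move=> hcS x; exact: (connected_hom_in_part HS HT disST covST conC hom hcS).
have in_T h : is_rack_emb h -> [forall x, h x \in T] = (h c \notin S).
  move=> /is_rack_embP[hom _]; apply/forallP/idP => [/(_ c) hcT | hcNS].
    by rewrite (disjointFl disST hcT).
  have : h c \in S :|: T by rewrite covST inE.
  rewrite inE (negbTE hcNS) => hcT.
  have disTS : [disjoint T & S] by rewrite disjoint_sym.
  have covTS : T :|: S = [set: R] by rewrite setUC.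
  by move=> x; apply: (connected_hom_in_part HT HS disTS covTS conC hom hcT).
rewrite -(cardsID [set h : {ffun C -> R} | h c \in S]).
congr (_ + _); apply: eq_card => h; rewrite !inE;
  by case hemb: (is_rack_emb h); rewrite ?andbT ?andbF // ?in_S ?in_T.
Qed.

Lemma burnside_additive_card_rack_embs (C : frack) : connected_rack C ->
  burnside_additive (fun R : frack => (#|rack_embs C R| : int)).
Proof.
move=> conC; split=> [R1 R2 iso12 | R S T HS HT disST covST].
  by rewrite (card_rack_embs_iso C iso12).
rewrite (card_rack_embs_decomposition HS HT conC disST covST).
by rewrite -!card_rack_embs_subrack PoszD.
Qed.

Lemma burnside_eq_sym (C D : frack) : burnside_eq C D -> burnside_eq D C.
Proof. by move=> eqCD A f f_add; rewrite (eqCD A f f_add). Qed.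

Lemma rack_emb_of_burnside_eq (C D : frack) :
  connected_rack C -> burnside_eq C D -> exists h, h \in rack_embs C D.
Proof.
move=> conC eqCD; apply/card_gt0P.
have [<-] := eqCD _ _ (burnside_additive_card_rack_embs conC).
by apply/card_gt0P; exists [ffun x => x]; apply: rack_emb_id.
Qed.

Theorem theorem4p2 (C D : frack) :
  connected_rack C -> connected_rack D -> burnside_eq C D -> rack_iso C D.
Proof.
move=> conC conD eqCD.
have [h] := rack_emb_of_burnside_eq conC eqCD.
rewrite inE => /is_rack_embP[hom h_inj].
have [h'] := rack_emb_of_burnside_eq conD (burnside_eq_sym eqCD).
rewrite inE => /is_rack_embP[_ h'_inj].
have card_DC : #|D| <= #|C| by rewrite -(card_image h'_inj) max_card.
by exists h; split=> //; apply: inj_card_bij h_inj card_DC.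
Qed.
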